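(* For every nested sequence $\Gamma=(\Gamma_j)_{j\ge1}$, $\Gamma_1\supset\Gamma_2\supset\cdots$, of lattices in $H_3(\mathbb R)$, we have $\tau(S_\Gamma)\supset\xi_\Gamma$.
   Context: $H_3(\mathbb R)$: real $3\times3$ upper triangular unipotent matrices; $c(t)$ has $(1,3)$ entry $t$, other off-diagonal entries $0$; for $g$ with $(1,2)$ entry $t_1$ and $(2,3)$ entry $t_2$, $p(g)=(t_1,t_2)$. A lattice is a discrete subgroup of finite covolume. For a lattice $\Lambda$: $\xi_\Lambda>0$ with $\Lambda\cap\{c(t)\}=\{c(m\xi_\Lambda):m\in\mathbb Z\}$; $p(\Lambda)=A\mathbb Z^2$ and $p(\Lambda)^*:=(A^* )^{-1}\mathbb Z^2$. $S_\Gamma:=\bigcup_jp(\Gamma_j)^*$ and $\xi_\Gamma:=\bigcup_j\xi_{\Gamma_j}^{-1}\mathbb Z$; $S_\Gamma$ is off-rational. Off-rational: a subgroup $S\subset\mathbb R^m$ with cocompact closure and $S=AQ$ for $A\in GL_m(\mathbb R)$ and a subgroup $Q\subset\mathbb Q^m$; writing $Q=\bigcup_jA_j^{-1}\mathbb Z^m$ with $A_j\in GL_m(\mathbb R)\cap M_m(\mathbb Z)$, $A_1^{-1}\mathbb Z^m\subset A_2^{-1}\mathbb Z^m\subset\cdots$, set $\tau(S):=\bigcup_j\frac{\det A}{\det A_j}\mathbb Z$ (independent of the choices). *)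

From HB Require Import structures.
From mathcomp Require Import all_boot all_order all_algebra.
From mathcomp Require Import all_classical all_reals all_analysis.
Set Implicit Arguments. Unset Strict Implicit. Unset Printing Implicit Defensive.
Import Order.TTheory GRing.Theory Num.Theory.
Local Open Scope classical_set_scope.
Local Open Scope ring_scope.

Section H3.
Variable R : realType.

Definition H3 : set 'M[R]_3 :=
  [set g | [/\ g 0 0 = 1, g 1 1 = 1 & g 2 2 = 1] /\ [/\ g 1 0 = 0, g 2 0 = 0 & g 2 1 = 0]].

Definition cH (t : R) : 'M[R]_3 := 1%:M + t *: delta_mx 0 2.

Definition pH (g : 'M[R]_3) : 'cV[R]_2 :=
  \col_(i < 2) (if i == 0 then g 0 1 else g 1 2).

Definition Zvec : set 'cV[R]_2 := range (fun z : 'cV[int]_2 => map_mx intr z).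

(* Haar measure on H_3(R) in the global chart g |-> (t_1, t_2, t_3) *)
Definition coordH (g : 'M[R]_3) : (R * R) * R := ((g 0 1, g 1 2), g 0 2).

Definition lebesgue3 :=
  ((@lebesgue_measure R \x @lebesgue_measure R) \x @lebesgue_measure R)%E.

Definition is_subgroupH (L : set 'M[R]_3) : Prop :=
  [/\ L `<=` H3, L 1%:M,
      (forall g h, L g -> L h -> L (g *m h)) &
      (forall g, L g -> L (invmx g))].

Definition discreteH (L : set 'M[R]_3) : Prop :=
  forall g, L g -> exists2 e : R, 0 < e &
    forall h, L h -> (forall i j, `|h i j - g i j| < e) -> h = g.

Definition finite_covolume (L : set 'M[R]_3) : Prop :=
  exists F : set ((R * R) * R),
    [/\ measurable F, (lebesgue3 F < +oo)%E &
        forall g, H3 g -> exists! gam, L gam /\ F (coordH (gam *m g))].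

Definition is_lattice (L : set 'M[R]_3) : Prop :=
  [/\ is_subgroupH L, discreteH L & finite_covolume L].

Definition is_xi (L : set 'M[R]_3) (xi : R) : Prop :=
  0 < xi /\ L `&` range cH = range (fun m : int => cH (m%:~R * xi)).

Definition is_pbasis (L : set 'M[R]_3) (A : 'M[R]_2) : Prop :=
  A \in unitmx /\ pH @` L = (fun v => A *m v) @` Zvec.

Definition pdual (L : set 'M[R]_3) : set 'cV[R]_2 :=
  [set v | exists A, is_pbasis L A /\ ((fun w => invmx A^T *m w) @` Zvec) v].

Definition S_Gamma (G : nat -> set 'M[R]_3) : set 'cV[R]_2 :=
  \bigcup_j pdual (G j).

Definition xi_Gamma (G : nat -> set 'M[R]_3) : set R :=
  [set x | exists j xi, is_xi (G j) xi /\ exists m : int, x = m%:~R / xi].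

Definition off_rational_rep (S : set 'cV[R]_2) (A : 'M[R]_2)
    (As : nat -> 'M[int]_2) : Prop :=
  [/\ A \in unitmx,
      (forall j, map_mx intr (As j) \in @unitmx R 2),
      (forall j, (fun v => invmx (map_mx intr (As j)) *m v) @` Zvec `<=`
                 (fun v => invmx (map_mx intr (As j.+1)) *m v) @` Zvec) &
      S = (fun v => A *m v) @`
            (\bigcup_j ((fun v => invmx (map_mx intr (As j)) *m v) @` Zvec))].

Definition tau (A : 'M[R]_2) (As : nat -> 'M[int]_2) : set R :=
  [set x | exists j (k : int),
     x = k%:~R * (\det A / (\det (As j))%:~R)].

End H3.

From HB Require Import structures.
From mathcomp Require Import all_boot all_order all_algebra.
From mathcomp Require Import all_classical all_reals all_analysis.
From mathcomp Require Import measurable_realfun.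
From mathcomp Require Import lra ring zify.
Set Implicit Arguments. Unset Strict Implicit. Unset Printing Implicit Defensive.
Import Order.TTheory GRing.Theory Num.Theory.
Local Open Scope classical_set_scope.
Local Open Scope ring_scope.

(* Let [L] be a lattice with [L ∩ c(R) = c(xi Z)]. Since the commutator of
   [g] and [h] is [c(pcross g h)], where [pcross g h = det (p g, p h)], the
   form [pcross] takes values in [xi Z] on [L]. Finite covolume forces [p(L)]
   to span [R^2] (a subgroup whose projection lies on a line has no
   fundamental domain of finite measure), and a Hermite reduction of the
   integer coordinates [(pcross g g2, pcross g1 g) / xi] gives a basis [B] of
   [p(L)] with [det B ∈ xi Z]. The columns of the dual basis [(B^T)^-1] lie in
   [S_Γ = A ∪_j A_j^-1 Z^2], hence at a common level [J], so that
   [(det B)^-1 ∈ (det A / det A_J) Z]. Thus [m / xi = m k / det B ∈ τ(S_Γ)]. *)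

Section LebesgueShear.
Variable R : realType.
Local Notation Rm := (measurableTypeR R).
Local Notation mu := (@lebesgue_measure R).
Local Notation mu2 := (mu \x mu)%E.
Local Notation mu3 := (mu2 \x mu)%E.

Lemma measurable_addr (c : R) : measurable_fun setT (fun x : Rm => (x + c : Rm)).
Proof. by apply: measurable_funD. Qed.

Lemma lebesgue_measure_preimage_addr (c : R) (A : set Rm) : measurable A ->
  mu ((fun x : Rm => (x + c : Rm)) @^-1` A) = mu A.
Proof.
move=> mA.
rewrite -[LHS]/(pushforward mu ((fun x : R => x + c) : R -> Rm) A).
apply/esym/lebesgue_measure_unique => //=; first exact: measurable_addr.
move=> _ _ [[a b]] _ <-.
rewrite /pushforward.
have -> : (fun x : R => x + c) @^-1` `]a, b]%classic = `](a - c), (b - c)]%classic.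
  by apply/seteqP; split => x /=; rewrite !in_itv /= ltrBlDr lerBrDr.
rewrite !lebesgue_measure_itv /= !lte_fin ltrD2r.
by case: ifP => // _; congr (_%:E); lra.
Qed.

Definition translate2 (a b : R) (q : Rm * Rm) : Rm * Rm := (q.1 + a, q.2 + b).

Lemma measurable_translate2 a b : measurable_fun setT (translate2 a b).
Proof.
apply: measurable_fun_pair.
  exact: measurableT_comp (measurable_addr a) measurable_fst.
exact: measurableT_comp (measurable_addr b) measurable_snd.
Qed.

Lemma lebesgue2_preimage_translate a b (X : set (Rm * Rm)) : measurable X ->
  mu2 (translate2 a b @^-1` X) = mu2 X.
Proof.
move=> mX.
rewrite -[LHS]/(pushforward mu2 (translate2 a b) X).
have := @product_measure_unique _ _ _ _ R mu mu
  (measure_function_pushforward__canonical__measure_function_Measure mu2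
     (measurable_translate2 a b)).
move=> /(_ _ X mX) <- //= A B mA mB.
rewrite /pushforward.
have -> : translate2 a b @^-1` (A `*` B) =
    ((fun x => x + a) @^-1` A) `*` ((fun x => x + b) @^-1` B).
  by apply/seteqP; split => -[x y].
rewrite product_measure1E; last 2 first.
- by rewrite -[X in measurable X]setTI; apply: measurable_addr.
- by rewrite -[X in measurable X]setTI; apply: measurable_addr.
by rewrite -(lebesgue_measure_preimage_addr a mA) -(lebesgue_measure_preimage_addr b mB).
Qed.

Definition shear (a b c al be : R) (t : (Rm * Rm) * Rm) : (Rm * Rm) * Rm :=
  (translate2 a b t.1, t.2 + (c + al * t.1.1 + be * t.1.2)).

Lemma measurable_shear a b c al be : measurable_fun setT (shear a b c al be).
Proof.
apply: measurable_fun_pair.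
  exact: measurableT_comp (measurable_translate2 a b) measurable_fst.
apply: measurable_funD; first exact: measurable_snd.
apply: measurable_funD; first apply: measurable_funD.
- exact: measurable_cst.
- apply: measurable_funM; first exact: measurable_cst.
  exact: measurableT_comp measurable_fst measurable_fst.
- apply: measurable_funM; first exact: measurable_cst.
  exact: measurableT_comp measurable_snd measurable_fst.
Qed.

(* By Fubini: each vertical section is translated, then the base is translated. *)
Lemma lebesgue3_preimage_shear a b c al be (E : set ((Rm * Rm) * Rm)) :
  measurable E -> mu3 (shear a b c al be @^-1` E) = mu3 E.
Proof.
move=> mE.
pose f q := mu (xsection E q).
have mf : measurable_fun setT f := measurable_fun_xsection mu mE.
transitivity (\int[mu2]_q f (translate2 a b q))%E.
  rewrite [LHS]/product_measure1; congr (integral _ _ _); apply/funext => q /=.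
  have -> : xsection (shear a b c al be @^-1` E) q =
      (fun z : Rm => (z + (c + al * q.1 + be * q.2) : Rm)) @^-1`
        xsection E (translate2 a b q).
    by apply/seteqP; split => z; rewrite /xsection /= !inE.
  by rewrite lebesgue_measure_preimage_addr //; apply: measurable_xsection.
have := ge0_integral_pushforward (measurable_translate2 a b) mu2 (D := setT)
  (f := f) measurableT mf (fun _ _ => measure_ge0 _ _).
rewrite preimage_setT => <-.
apply: (eq_measure_integral mu2) => [A mA|].
- exact: measurable_translate2.
- by move=> mT B mB _; exact: lebesgue2_preimage_translate.
Qed.

End LebesgueShear.

Section HeisenbergCoordinates.
Variable R : realType.
Local Notation Rm := (measurableTypeR R).
Local Notation T3 := ((Rm * Rm) * Rm)%type.
Local Notation mu := (@lebesgue_measure R).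
Local Notation mu3 := ((mu \x mu) \x mu)%E.

(* The group law of [H3] in the chart [coordH]. *)
Definition hmul (s t : T3) : T3 :=
  ((s.1.1 + t.1.1, s.1.2 + t.1.2), s.2 + t.2 + s.1.1 * t.1.2).
Definition hinv (s : T3) : T3 := ((- s.1.1, - s.1.2), - s.2 + s.1.1 * s.1.2).
Definition h0 : T3 := ((0, 0), 0).

Lemma hmul_shear (g : T3) : hmul g = shear g.1.1 g.1.2 g.2 0 g.1.1.
Proof.
by apply/funext => -[[x y] z]; rewrite /hmul /shear /translate2 /=; congr ((_, _), _); ring.
Qed.

Lemma hmulr_shear (h : T3) : (hmul^~ h) = shear h.1.1 h.1.2 h.2 h.1.2 0.
Proof.
by apply/funext => -[[x y] z]; rewrite /hmul /shear /translate2 /=; congr ((_, _), _); ring.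
Qed.

Lemma measurable_hmul_preimage (g : T3) (E : set T3) :
  measurable E -> measurable (hmul g @^-1` E).
Proof.
by move=> mE; rewrite hmul_shear -[X in measurable X]setTI; exact: measurable_shear.
Qed.

Lemma measurable_hmulr_preimage (h : T3) (E : set T3) :
  measurable E -> measurable (hmul^~ h @^-1` E).
Proof.
by move=> mE; rewrite hmulr_shear -[X in measurable X]setTI; exact: measurable_shear.
Qed.

Lemma lebesgue3_hmul_preimage (g : T3) (E : set T3) :
  measurable E -> mu3 (hmul g @^-1` E) = mu3 E.
Proof. by move=> mE; rewrite hmul_shear lebesgue3_preimage_shear. Qed.

Lemma lebesgue3_hmulr_preimage (h : T3) (E : set T3) :
  measurable E -> mu3 (hmul^~ h @^-1` E) = mu3 E.
Proof. by move=> mE; rewrite hmulr_shear lebesgue3_preimage_shear. Qed.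

Lemma hmulK (g t : T3) : hmul (hinv g) (hmul g t) = t.
Proof.
by case: g t => [[a b] c] [[x y] z]; rewrite /hmul /hinv /=; congr ((_, _), _); ring.
Qed.

Lemma hmulKV (g t : T3) : hmul g (hmul (hinv g) t) = t.
Proof.
by case: g t => [[a b] c] [[x y] z]; rewrite /hmul /hinv /=; congr ((_, _), _); ring.
Qed.

Lemma hinvK (g : T3) : hinv (hinv g) = g.
Proof. by case: g => [[a b] c]; rewrite /hinv /=; congr ((_, _), _); ring. Qed.

Lemma hmulg0 (g : T3) : hmul g h0 = g.
Proof. by case: g => [[a b] c]; rewrite /hmul /h0 /=; congr ((_, _), _); ring. Qed.

Lemma hmul_divr (a b h : T3) : hmul (hmul a h) (hinv (hmul b h)) = hmul a (hinv b).
Proof.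
by case: a b h => [[a1 a2] a3] [[b1 b2] b3] [[x y] z]; rewrite /hmul /hinv /=;
  congr ((_, _), _); ring.
Qed.

Definition cube (r : R) : set T3 :=
  [set t | `|t.1.1| < r /\ `|t.1.2| < r /\ `|t.2| < r].

Lemma cubeE (r : R) :
  cube r = (`]-r, r[%classic `*` `]-r, r[%classic) `*` `]-r, r[%classic.
Proof.
rewrite /cube; apply/seteqP; split => -[[x y] z] /=; rewrite !in_itv /= -!ltr_norml.
  by move=> [-> [-> ->]].
by move=> [[-> ->] ->].
Qed.

Lemma measurable_cube (r : R) : measurable (cube r).
Proof. by rewrite cubeE; apply: measurableX; first apply: measurableX. Qed.

Lemma lebesgue3_cube (r : R) : 0 < r -> mu3 (cube r) = ((r *+ 2) ^+ 3)%:E.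
Proof.
move=> r0; rewrite cubeE product_measure1E //; last exact: measurableX.
pose I : set Rm := `]-r, r[%classic.
transitivity ((mu I * mu I) * mu I)%E.
  by congr (_ * _)%E; exact: product_measure1E.
rewrite /I lebesgue_measure_itv /= lte_fin ifT; last lra.
by rewrite -!EFinD -!EFinM; congr (_%:E); rewrite !exprS expr0; ring.
Qed.

Lemma cube_divr (r e : R) (d d' : T3) : 0 < r -> r <= e / 8 -> r <= 1 ->
  cube r d -> cube r d' -> cube e (hmul d' (hinv d)).
Proof.
case: d d' => [[x y] z] [[x' y'] z'] r0 re r1 [/= hx [hy hz]] [/= hx' [hy' hz']].
have rr : r * r <= r by rewrite -[leRHS](mulr1 r) ler_wpM2l // ltW.
have hxy : `|x * y| <= r.
  by rewrite normrM; apply: le_trans rr; apply: ler_pM => //; exact: ltW.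
have hxy' : `|x' * - y| <= r.
  by rewrite normrM normrN; apply: le_trans rr; apply: ler_pM => //; exact: ltW.
have h1 := ler_normB x' x; have h2 := ler_normB y' y.
have h3 := ler_normD (z' + (- z + x * y)) (x' * - y).
have h4 := ler_normD z' (- z + x * y).
have h5 := ler_normD (- z) (x * y); rewrite normrN in h5.
rewrite /cube /=; lra.
Qed.

End HeisenbergCoordinates.
Arguments h0 {R}.
Arguments hmul {R}.
Arguments hinv {R}.

Lemma natr_dist_lt1 (R : realFieldType) (k k' : nat) : `|k%:R - k'%:R : R| < 1 -> k = k'.
Proof.
rewrite ltr_norml => /andP[h1 h2].
case: (ltngtP k k') => // hk.
- have : k%:R + 1 <= k'%:R :> R by rewrite natr1 ler_nat.
  by move=> h3; exfalso; lra.
- have : k'%:R + 1 <= k%:R :> R by rewrite natr1 ler_nat.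
  by move=> h3; exfalso; lra.
Qed.

(* A countable discrete subgroup inside the kernel of a nonzero linear form
   [psi] on the first two coordinates has no fundamental domain of finite
   measure: for every [k], the part of [F] covering a small cube translated to
   [psi]-height [k] has the measure of the cube, and these parts are disjoint
   because [psi] is invariant under the subgroup. *)
Section CovolumeNoLine.
Variable R : realType.
Local Notation Rm := (measurableTypeR R).
Local Notation T3 := ((Rm * Rm) * Rm)%type.
Local Notation mu3 := ((@lebesgue_measure R \x @lebesgue_measure R) \x
                        @lebesgue_measure R)%E.

Variable Lc : set T3.
Hypothesis LcM : forall s t, Lc s -> Lc t -> Lc (hmul s t).
Hypothesis LcV : forall s, Lc s -> Lc (hinv s).
Variable e : R.
Hypothesis e0 : 0 < e.
Hypothesis Lc_discrete : forall s, Lc s -> cube e s -> s = h0.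
Variable iota : T3 -> nat.
Hypothesis iota_inj : forall s t, Lc s -> Lc t -> iota s = iota t -> s = t.
Variable F : set T3.
Hypothesis mF : measurable F.
Hypothesis Ffin : (mu3 F < +oo)%E.
Hypothesis F_cover : forall t, exists g, Lc g /\ F (hmul g t).
Hypothesis F_uniq :
  forall t g g', Lc g -> Lc g' -> F (hmul g t) -> F (hmul g' t) -> g = g'.
Variables al be : R.
Hypothesis psi_neq0 : 0 < al ^+ 2 + be ^+ 2.
Hypothesis Lc_psi : forall g, Lc g -> al * g.1.1 + be * g.1.2 = 0.

Let psi (t : T3) := al * t.1.1 + be * t.1.2.
Let A := `|al| + `|be| + 1.
Let A_gt0 : 0 < A.
Proof. by rewrite /A; have := normr_ge0 al; have := normr_ge0 be; lra. Qed.

(* The cube radius is small enough for discreteness and for [|psi| <= 1/4]. *)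
Let r := Num.min (Num.min (e / 8) 1) (1 / (4 * A)).
Let r_gt0 : 0 < r.
Proof.
have A4 : 0 < 4 * A by apply: mulr_gt0 => //; exact: A_gt0.
by rewrite /r !lt_min !divr_gt0 ?ltr01.
Qed.
Let r_le_e8 : r <= e / 8.
Proof. by rewrite /r !ge_min lexx. Qed.
Let r_le1 : r <= 1.
Proof. by rewrite /r !ge_min lexx orbT. Qed.
Let rA : r * A <= 1 / 4.
Proof.
have : r <= 1 / (4 * A) by rewrite /r ge_min lexx orbT.
by rewrite ler_pdivlMr; [lra | apply: mulr_gt0 => //; exact: A_gt0].
Qed.

Let psi_cube (d : T3) : cube r d -> `|psi d| <= 1 / 4.
Proof.
case: d => [[x y] z] [/= hx [hy _]].
apply: le_trans (ler_normD _ _) _; rewrite !normrM.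
have h1 : `|al| * `|x| <= `|al| * r by apply: ler_wpM2l => //; exact: ltW.
have h2 : `|be| * `|y| <= `|be| * r by apply: ler_wpM2l => //; exact: ltW.
by have := rA; rewrite /A; have := r_gt0; lra.
Qed.

Let hk (k : nat) : T3 :=
  ((k%:R * (al / (al ^+ 2 + be ^+ 2)), k%:R * (be / (al ^+ 2 + be ^+ 2))), 0).
Let psi_hk k : psi (hk k) = k%:R.
Proof. by rewrite /psi /=; field; exact: lt0r_neq0. Qed.

(* [D k] is the cube translated to [psi]-height [k]; [P k n] is the part of
   it moved into [F] by the element of index [n], and [Q k n] is its image in
   [F]. Indexing by [iota] makes these countable families. *)
Let D (k : nat) : set T3 := hmul^~ (hinv (hk k)) @^-1` cube r.
Let Pk k (g : T3) : set T3 := [set t | D k t /\ F (hmul g t)].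
Let Qk k (g : T3) : set T3 := [set t | F t /\ D k (hmul (hinv g) t)].
Let P k (n : nat) : set T3 := [set t | exists g, [/\ Lc g, iota g = n & Pk k g t]].
Let Q k (n : nat) : set T3 := [set t | exists g, [/\ Lc g, iota g = n & Qk k g t]].
Let X (k : nat) : set T3 := \bigcup_n Q k n.

Let measurable_D k : measurable (D k).
Proof. exact: measurable_hmulr_preimage (measurable_cube r). Qed.

Let PQ_piece k n : (P k n = set0 /\ Q k n = set0) \/
  exists g, [/\ Lc g, P k n = Pk k g & Q k n = Qk k g].
Proof.
have [[g [Lg ign]]|nog] := pselect (exists g, Lc g /\ iota g = n).
  right; exists g; split => //; apply/seteqP; split => t;
    by [move=> [g' [Lg' ig' Pt]]; rewrite -(iota_inj Lg' Lg) // ign ig'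
       |move=> Pt; exists g].
by left; split; apply/seteqP; split => t //= [g [Lg ign _]]; apply: nog; exists g.
Qed.

Let measurable_P k n : measurable (P k n).
Proof.
have [[-> _]//|[g [_ -> _]]] := PQ_piece k n.
exact: measurableI (measurable_D k) (measurable_hmul_preimage g mF).
Qed.

Let measurable_Q k n : measurable (Q k n).
Proof.
have [[_ ->]//|[g [_ _ ->]]] := PQ_piece k n.
exact: measurableI mF (measurable_hmul_preimage (hinv g) (measurable_D k)).
Qed.

Let mu3_PQ k n : mu3 (P k n) = mu3 (Q k n).
Proof.
have [[-> ->]//|[g [_ -> ->]]] := PQ_piece k n.
have -> : Pk k g = hmul g @^-1` Qk k g.
  by apply/seteqP; split => t; rewrite /Pk /Qk /= hmulK => -[].
apply: lebesgue3_hmul_preimage.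
exact: measurableI mF (measurable_hmul_preimage (hinv g) (measurable_D k)).
Qed.

Let D_cover k : D k = \bigcup_n P k n.
Proof.
apply/seteqP; split => [t Dt|t [n _ [g [_ _ []]]]//].
by have [g [Lg Fg]] := F_cover t; exists (iota g) => //; exists g.
Qed.

Let trivIset_P k : trivIset setT (P k).
Proof.
move=> i j _ _ [t [[g [Lg <- [_ Fg]]] [g' [Lg' <- [_ Fg']]]]].
by rewrite (F_uniq Lg Lg' Fg Fg').
Qed.

(* Two points of [F] over the same small cube differ by a small element. *)
Let trivIset_Q k : trivIset setT (Q k).
Proof.
move=> i j _ _ [t [[g [Lg <- [Ft Dt]]] [g' [Lg' <- [_ Dt']]]]].
have := cube_divr r_gt0 r_le_e8 r_le1 Dt Dt'; rewrite !hmul_divr hinvK => small.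
have /Lc_discrete /(_ small) g'g : Lc (hmul (hinv g') g).
  by apply: LcM => //; exact: LcV.
by rewrite -[g](hmulKV g') g'g hmulg0.
Qed.

Let psi_hmul s t : psi (hmul s t) = psi s + psi t.
Proof. by rewrite /psi /=; ring. Qed.

Let psi_hinv s : psi (hinv s) = - psi s.
Proof. by rewrite /psi /=; ring. Qed.

Let psi_Q k g t : Lc g -> D k (hmul (hinv g) t) -> `|psi t - k%:R| <= 1 / 4.
Proof.
move=> Lg /psi_cube; rewrite !psi_hmul !psi_hinv psi_hk.
by have -> : psi g = 0 := Lc_psi Lg; rewrite oppr0 add0r.
Qed.

Let trivIset_X : trivIset setT X.
Proof.
move=> k k' _ _ [t [[n _ [g [Lg _ [_ Dt]]]] [n' _ [g' [Lg' _ [_ Dt']]]]]].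
apply: (@natr_dist_lt1 R).
move: (psi_Q Lg Dt) (psi_Q Lg' Dt'); rewrite !ler_norml ltr_norml.
by move=> /andP[h1 h2] /andP[h3 h4]; apply/andP; split; lra.
Qed.

Let mu3_D k : mu3 (D k) = ((r *+ 2) ^+ 3)%:E.
Proof.
by rewrite /D lebesgue3_hmulr_preimage ?lebesgue3_cube //; exact: measurable_cube.
Qed.

Let mu3_X k : mu3 (X k) = ((r *+ 2) ^+ 3)%:E.
Proof.
rewrite -(mu3_D k) D_cover /X.
rewrite (measure_bigcup mu3 setT (Q k) (fun i _ => measurable_Q k i) (@trivIset_Q k)).
rewrite (measure_bigcup mu3 setT (P k) (fun i _ => measurable_P k i) (@trivIset_P k)).
by apply: eq_eseriesr => n _; exact/esym/mu3_PQ.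
Qed.

Lemma finite_covolume_no_line : False.
Proof.
set c := (r *+ 2) ^+ 3.
have c_gt0 : 0 < c by rewrite exprn_gt0 // pmulrn_rgt0.
have F_ge0 : (0 <= mu3 F)%E by exact: measure_ge0.
have F_fin : mu3 F \is a fin_num by rewrite ge0_fin_numE.
have hN (N : nat) : c *+ N <= fine (mu3 F).
  have : (mu3 (\big[setU/set0]_(i < N) X i) <= mu3 F)%E.
    apply: le_measure; rewrite ?inE //.
    - by apply: bigsetU_measurable => i _; exact: bigcupT_measurable.
    - move=> t; elim/big_ind: _ => //; first by move=> ? ? hA hB [/hA|/hB].
      by move=> i _ [n _ [g [_ _ []]]].
  rewrite (@measure_bigsetU_ord _ _ _ _ N xpredT X) //; last first.
  - by move=> i j _ _ /trivIset_X /val_inj; apply.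
  - by move=> i; exact: bigcupT_measurable.
  rewrite (eq_bigr (fun _ => c%:E)); last by move=> i _; exact: mu3_X.
  by rewrite sumEFin sumr_const card_ord -(fineK F_fin) lee_fin.
have := archi_boundP (divr_ge0 (fine_ge0 F_ge0) (ltW c_gt0)).
set N := Num.bound _; rewrite ltr_pdivrMr // => hb.
by have := le_lt_trans (hN N) hb; rewrite mulr_natl ltxx.
Qed.

End CovolumeNoLine.

Lemma ord3P (i : 'I_3) : [\/ i = 0, i = 1 | i = 2].
Proof.
by case: i => -[|[|[|//]]] ?; [constructor 1|constructor 2|constructor 3]; apply: val_inj.
Qed.

Section H3Algebra.
Variable R : realType.
Implicit Types (g h : 'M[R]_3) (x y z : R).

Lemma mulmx3E g h i j : (g *m h) i j = g i 0 * h 0 j + g i 1 * h 1 j + g i 2 * h 2 j.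
Proof.
rewrite mxE !big_ord_recr big_ord0 /= add0r.
by congr (_ * _ + _ * _ + _ * _); congr (_ _ _); apply: val_inj.
Qed.

Definition mkH x y z : 'M[R]_3 :=
  \matrix_(i, j) if i == j then 1
                 else if (i == 0) && (j == 1) then x
                 else if (i == 1) && (j == 2) then y
                 else if (i == 0) && (j == 2) then z else 0.

Lemma H3_mkH x y z : H3 (mkH x y z).
Proof. by split; split; rewrite mxE. Qed.

Lemma mkH_coord x y z : [/\ mkH x y z 0 1 = x, mkH x y z 1 2 = y & mkH x y z 0 2 = z].
Proof. by split; rewrite mxE. Qed.

Lemma H3_coord_inj g h : H3 g -> H3 h ->
  g 0 1 = h 0 1 -> g 1 2 = h 1 2 -> g 0 2 = h 0 2 -> g = h.
Proof.
move=> [[g00 g11 g22] [g10 g20 g21]] [[h00 h11 h22] [h10 h20 h21]] e01 e12 e02.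
apply/matrixP => i j.
by case: (ord3P i) => ->; case: (ord3P j) => ->;
  rewrite ?g00 ?g11 ?g22 ?g10 ?g20 ?g21 ?h00 ?h11 ?h22 ?h10 ?h20 ?h21.
Qed.

Lemma H3_mkHE g : H3 g -> g = mkH (g 0 1) (g 1 2) (g 0 2).
Proof.
move=> Hg; have [e1 e2 e3] := mkH_coord (g 0 1) (g 1 2) (g 0 2).
by apply: H3_coord_inj; rewrite ?e1 ?e2 ?e3 //; exact: H3_mkH.
Qed.

Lemma H3_1 : H3 (1%:M : 'M[R]_3).
Proof. by split; split; rewrite !mxE. Qed.

Lemma H3_mulmx g h : H3 g -> H3 h ->
  [/\ H3 (g *m h), (g *m h) 0 1 = g 0 1 + h 0 1, (g *m h) 1 2 = g 1 2 + h 1 2 &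
      (g *m h) 0 2 = g 0 2 + h 0 2 + g 0 1 * h 1 2].
Proof.
move=> [[g00 g11 g22] [g10 g20 g21]] [[h00 h11 h22] [h10 h20 h21]].
by split; [split; split|..]; rewrite mulmx3E
  ?g00 ?g11 ?g22 ?g10 ?g20 ?g21 ?h00 ?h11 ?h22 ?h10 ?h20 ?h21; ring.
Qed.

Lemma H3_invmx g : H3 g ->
  [/\ H3 (invmx g), invmx g 0 1 = - g 0 1, invmx g 1 2 = - g 1 2 &
      invmx g 0 2 = - g 0 2 + g 0 1 * g 1 2].
Proof.
move=> Hg; set h := mkH (- g 0 1) (- g 1 2) (- g 0 2 + g 0 1 * g 1 2).
have [h1 h2 h3] := mkH_coord (- g 0 1) (- g 1 2) (- g 0 2 + g 0 1 * g 1 2).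
have [Hgh gh1 gh2 gh3] := H3_mulmx Hg (H3_mkH (- g 0 1) (- g 1 2) (- g 0 2 + g 0 1 * g 1 2)).
have gh : g *m h = 1%:M.
  apply: H3_coord_inj => //; first exact: H3_1.
  - by rewrite gh1 h1 !mxE addrN.
  - by rewrite gh2 h2 !mxE addrN.
  - by rewrite gh3 h2 h3 !mxE /=; ring.
have gu : g \in unitmx by case: (mulmx1_unit gh).
have -> : invmx g = h by rewrite -[RHS]mul1mx -(mulVmx gu) -mulmxA gh mulmx1.
by split => //; exact: H3_mkH.
Qed.

Lemma cH_coord (t : R) : [/\ H3 (cH t), cH t 0 1 = 0, cH t 1 2 = 0 & cH t 0 2 = t].
Proof. by split; [split; split|..]; rewrite !mxE /= ?mulr1 ?mulr0 ?addr0 ?add0r. Qed.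

Lemma cH_inj : injective (@cH R).
Proof.
by move=> s t e; have [_ _ _ <-] := cH_coord s; rewrite e; have [_ _ _ ->] := cH_coord t.
Qed.

Definition pcross g h : R := g 0 1 * h 1 2 - h 0 1 * g 1 2.

Lemma H3_commutator g h : H3 g -> H3 h ->
  g *m h *m invmx g *m invmx h = cH (pcross g h).
Proof.
move=> Hg Hh.
have [Hgi gi1 gi2 gi3] := H3_invmx Hg; have [Hhi hi1 hi2 hi3] := H3_invmx Hh.
have [Hgh gh1 gh2 gh3] := H3_mulmx Hg Hh.
have [H2 e21 e22 e23] := H3_mulmx Hgh Hgi.
have [H3' e31 e32 e33] := H3_mulmx H2 Hhi.
have [Hc c1 c2 c3] := cH_coord (pcross g h).
apply: H3_coord_inj => //.
- by rewrite e31 e21 gh1 gi1 hi1 c1; ring.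
- by rewrite e32 e22 gh2 gi2 hi2 c2; ring.
- by rewrite e33 e23 ?e21 ?e22 ?gh1 ?gh2 ?gh3 ?gi1 ?gi2 ?gi3 ?hi1 ?hi2 ?hi3 c3 /pcross; ring.
Qed.

Lemma H3_close g h (e : R) : H3 g -> H3 h ->
  `|h 0 1 - g 0 1| < e -> `|h 1 2 - g 1 2| < e -> `|h 0 2 - g 0 2| < e ->
  forall i j, `|h i j - g i j| < e.
Proof.
move=> [[g00 g11 g22] [g10 g20 g21]] [[h00 h11 h22] [h10 h20 h21]] e1 e2 e3.
have e0 : 0 < e by apply: le_lt_trans e1.
move=> i j; case: (ord3P i) => ->; case: (ord3P j) => -> //;
  by rewrite ?g00 ?g11 ?g22 ?g10 ?g20 ?g21 ?h00 ?h11 ?h22 ?h10 ?h20 ?h21 subrr normr0.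
Qed.

End H3Algebra.

Lemma rat_approx (R : realType) (x e : R) : 0 < e -> exists q : rat, `|x - ratr q| < e.
Proof.
move=> e0; have [q] := @rat_in_itvoo R (x - e) (x + e) ltac:(lra).
by rewrite in_itv /= => /andP[h1 h2]; exists q; rewrite ltr_norml; apply/andP; split; lra.
Qed.

(* Distinct points of a discrete set have distinct rational approximations
   at the scale of their isolation radii, hence a discrete set is countable. *)
Lemma discreteH_countable (R : realType) (L : set 'M[R]_3) : discreteH L ->
  exists iota : 'M[R]_3 -> nat, forall g h, L g -> L h -> iota g = iota h -> g = h.
Proof.
move=> Ldisc.
have approx g : exists q : 'M[rat]_3, L g -> exists2 e : R, 0 < e &
    (forall h, L h -> (forall i j, `|h i j - g i j| < e) -> h = g) /\
    forall i j, `|g i j - ratr (q i j)| < e / 2.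
  have [Lg|nLg] := pselect (L g); last by exists 0 => /nLg.
  have [e e0 iso] := Ldisc g Lg.
  have /choice[q hq] : forall ij : 'I_3 * 'I_3, exists q, `|g ij.1 ij.2 - ratr q| < e / 2.
    by move=> ij; apply: rat_approx; lra.
  exists (\matrix_(i, j) q (i, j)) => _; exists e => //; split => // i j.
  by rewrite mxE; exact: (hq (i, j)).
have [q hq] := choice approx.
exists (fun g => pickle (q g)) => g h Lg Lh /(pcan_inj (@pickleK_inv _)) qgh.
have [e e0 [isog apg]] := hq g Lg; have [e' e'0 [isoh aph]] := hq h Lh.
have near i j : `|h i j - g i j| < e / 2 + e' / 2.
  have a1 := apg i j; have a2 := aph i j; rewrite -qgh in a2; rewrite distrC in a1.
  by have := ler_distD (ratr (q g i j)) (h i j) (g i j); lra.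
have [e'e|ee'] := leP e' e.
  by apply/esym/isog => // i j; apply: lt_le_trans (near i j) _; lra.
by apply: isoh => // i j; rewrite distrC; apply: lt_trans (near i j) _; lra.
Qed.

Section Lattice.
Variable R : realType.
Local Notation Rm := (measurableTypeR R).
Local Notation T3 := ((Rm * Rm) * Rm)%type.
Implicit Types g h : 'M[R]_3.
Variable L : set 'M[R]_3.
Hypothesis Llat : is_lattice L.

Let LH : L `<=` @H3 R.
Proof. by case: Llat => -[]. Qed.
Let L1 : L 1%:M.
Proof. by case: Llat => -[]. Qed.
Let LM g h : L g -> L h -> L (g *m h).
Proof. by case: Llat => -[] _ _ LM _ _ _; exact: LM. Qed.
Let LV g : L g -> L (invmx g).
Proof. by case: Llat => -[] _ _ _ LV _ _; exact: LV. Qed.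

Lemma lattice_pcross_xiZ xi g h : is_xi L xi -> L g -> L h ->
  exists m : int, pcross g h = m%:~R * xi.
Proof.
move=> [_ /seteqP[Lc _]] Lg Lh; have Hg := LH Lg; have Hh := LH Lh.
have Lcomm : (L `&` range (@cH R)) (cH (pcross g h)).
  split; last by exists (pcross g h).
  rewrite -H3_commutator //.
  by apply: LM; [apply: LM; [apply: LM|apply: LV]|apply: LV].
by have [m _ /cH_inj mxi] := Lc _ Lcomm; exists m.
Qed.

Let coordH_mul g h : H3 g -> H3 h ->
  (coordH (g *m h) : T3) = hmul (coordH g) (coordH h).
Proof. by move=> Hg Hh; have [_ e1 e2 e3] := H3_mulmx Hg Hh; rewrite /coordH e1 e2 e3. Qed.

Let coordH_mkH (t : T3) : (coordH (mkH t.1.1 t.1.2 t.2) : T3) = t.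
Proof.
by case: t => [[x y] z]; have [e1 e2 e3] := mkH_coord x y z; rewrite /coordH e1 e2 e3.
Qed.

Let Lc : set T3 := [set (coordH g : T3) | g in L].

Lemma lattice_not_in_line (al be : R) : 0 < al ^+ 2 + be ^+ 2 ->
  ~ (forall g, L g -> al * g 0 1 + be * g 1 2 = 0).
Proof.
move=> psi_neq0 Lpsi; case: Llat => _ Ldisc [F [mF Ffin Fdom]].
have [e e0 iso1] := Ldisc _ L1.
have [iota iota_inj] := discreteH_countable Ldisc.
have LcM s t : Lc s -> Lc t -> Lc (hmul s t).
  move=> [g Lg <-] [h Lh <-]; exists (g *m h); first exact: LM.
  exact: coordH_mul (LH Lg) (LH Lh).
have LcV s : Lc s -> Lc (hinv s).
  move=> [g Lg <-]; exists (invmx g); first exact: LV.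
  by have [_ e1 e2 e3] := H3_invmx (LH Lg); rewrite /coordH e1 e2 e3.
have Lc_discrete s : Lc s -> cube e s -> s = h0.
  move=> [h Lh <-] [/= h1 [h2 h3]]; rewrite (iso1 h Lh); first by rewrite /coordH !mxE.
  by apply: H3_close; [exact: H3_1|exact: LH|..]; rewrite !mxE /= subr0.
have iotac_inj s t : Lc s -> Lc t ->
    iota (mkH s.1.1 s.1.2 s.2) = iota (mkH t.1.1 t.1.2 t.2) -> s = t.
  move=> [g Lg <-] [h Lh <-] /=.
  by rewrite -(H3_mkHE (LH Lg)) -(H3_mkHE (LH Lh)) => /iota_inj ->.
have dom_mkH t : exists! gam, L gam /\ F (hmul (coordH gam) t).
  have [gam [[Lgam Fg] uniq]] := Fdom _ (H3_mkH t.1.1 t.1.2 t.2).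
  exists gam; split.
    split => //; rewrite -[X in hmul _ X]coordH_mkH -coordH_mul //; [exact: LH|exact: H3_mkH].
  move=> g' [Lg' Fg']; apply: uniq; split => //.
  rewrite coordH_mul ?coordH_mkH //; [exact: LH|exact: H3_mkH].
apply: (@finite_covolume_no_line R Lc LcM LcV e e0 Lc_discrete _ iotac_inj
  F mF Ffin _ _ al be psi_neq0).
- move=> t; have [gam [[Lgam Fg] _]] := dom_mkH t.
  by exists (coordH gam); split => //; exists gam.
- move=> t _ _ [g Lg <-] [g' Lg' <-] Fg Fg'; have [gam [_ uniq]] := dom_mkH t.
  by rewrite -(uniq g) // -(uniq g').
- by move=> _ [g Lg <-]; exact: Lpsi.
Qed.

Lemma lattice_pcross_neq0 : exists g1 g2, [/\ L g1, L g2 & pcross g1 g2 != 0].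
Proof.
apply: contrapT => ndeg.
have pcross0 g1 g2 : L g1 -> L g2 -> pcross g1 g2 = 0.
  by move=> L1' L2'; apply: contrapT => /eqP ?; apply: ndeg; exists g1, g2.
have [[g0 [Lg0 g0_neq0]]|pL0] := pselect (exists g0, L g0 /\ (g0 0 1 != 0 \/ g0 1 2 != 0)).
  apply: (@lattice_not_in_line (g0 1 2) (- g0 0 1)).
    rewrite sqrrN; case: g0_neq0 => ?; [rewrite addrC|];
      by apply: ltr_pwDl; rewrite ?sqr_ge0 // exprn_even_gt0 //= orbT.
  by move=> g Lg; have := pcross0 _ _ Lg0 Lg; rewrite /pcross; lra.
apply: (@lattice_not_in_line 1 0); first lra.
move=> g Lg; rewrite mul1r mul0r addr0; apply: contrapT => /eqP ?.
by apply: pL0; exists g; split => //; left.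
Qed.

End Lattice.

Lemma ord2P (i : 'I_2) : i = 0 \/ i = 1.
Proof. by case: i => -[|[|//]] ?; [left|right]; apply: val_inj. Qed.

Definition col2mx (T : Type) n (u v : 'cV[T]_n) : 'M[T]_(n, 2) :=
  \matrix_(i, j) (if j == 0 then u else v) i 0.

Lemma col2mx_col (T : Type) n (A : 'M[T]_(n, 2)) : A = col2mx (col 0 A) (col 1 A).
Proof. by apply/matrixP => i j; rewrite !mxE; case: (ord2P j) => ->; rewrite mxE. Qed.

Lemma map_col2mx (T U : Type) (f : T -> U) n (u v : 'cV[T]_n) :
  map_mx f (col2mx u v) = col2mx (map_mx f u) (map_mx f v).
Proof. by apply/matrixP => i j; rewrite !mxE; case: ifP; rewrite mxE. Qed.

Section TwoByTwo.
Variable R : comNzRingType.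
Implicit Types (u v : 'cV[R]_2) (A : 'M[R]_2).

Lemma mulmx2E m n (A : 'M[R]_(m, 2)) (B : 'M[R]_(2, n)) i j :
  (A *m B) i j = A i 0 * B 0 j + A i 1 * B 1 j.
Proof.
rewrite mxE !big_ord_recr big_ord0 /= add0r.
by congr (_ * _ + _ * _); congr (_ _ _); apply: val_inj.
Qed.

Lemma det_mx22 A : \det A = A 0 0 * A 1 1 - A 0 1 * A 1 0.
Proof.
rewrite (expand_det_row _ 0) !big_ord_recr big_ord0 /= add0r /cofactor !det_mx11 !mxE /=.
have -> : widen_ord (leqnSn 1) ord_max = 0 :> 'I_2 by apply: val_inj.
have -> : ord_max = 1 :> 'I_2 by apply: val_inj.
have -> : lift 0 (0 : 'I_1) = 1 :> 'I_2 by apply: val_inj.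
have -> : lift 1 (0 : 'I_1) = 0 :> 'I_2 by apply: val_inj.
by rewrite expr0 expr1; ring.
Qed.

Lemma mulmx_col2mx m n (M : 'M[R]_(m, n)) (u v : 'cV[R]_n) :
  M *m col2mx u v = col2mx (M *m u) (M *m v).
Proof.
apply/matrixP => i j; rewrite !mxE; case: ifP => j0; rewrite mxE.
all: by apply: eq_bigr => k _; rewrite mxE j0.
Qed.

Lemma col2mx_mul u v (z : 'cV[R]_2) : col2mx u v *m z = z 0 0 *: u + z 1 0 *: v.
Proof.
by apply/matrixP => i j; rewrite (ord1 j) mulmx2E !mxE /= [_ * z _ _]mulrC [v _ _ * _]mulrC.
Qed.

Lemma det_col2mx u v : \det (col2mx u v) = u 0 0 * v 1 0 - v 0 0 * u 1 0.
Proof. by rewrite det_mx22 !mxE. Qed.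

End TwoByTwo.

(* The least positive element generates, by Euclidean division. *)
Lemma intgroup_cyclic (S : int -> Prop) :
  (forall x y, S x -> S y -> S (x - y)) -> (forall k x, S x -> S (k * x)) ->
  forall n, n != 0 -> S n -> exists a, [/\ 0 < a, S a & forall x, S x -> exists k, x = k * a].
Proof.
move=> SB SZ n n0 Sn.
have ex : exists m, (0 < m)%N && `[< S m%:Z >].
  exists `|n|%N; rewrite absz_gt0 n0; apply/asboolP.
  rewrite abszE; have [/ger0_norm -> //|/ltr0_norm ->] := leP 0 n.
  by rewrite -mulN1r; exact: SZ.
case: (ex_minnP ex) => m /andP[m_gt0 /asboolP Sm] m_min.
exists m%:Z; split => // x Sx; exists (x %/ m)%Z.
have Sr : S (x %% m)%Z.
  rewrite [X in S X](_ : _ = x - (x %/ m)%Z * m); first by apply: SB => //; apply: SZ.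
  by rewrite {2}(divz_eq x m) addrC addKr.
have r_lt : (x %% m)%Z < m by apply: ltz_pmod; rewrite ltz_nat.
have /gez0_abs r_abs := modz_ge0 x (d := m%:Z) ltac:(by rewrite eqz_nat -lt0n).
have [r0|r_neq0] := eqVneq (x %% m)%Z 0.
  by rewrite {1}(divz_eq x m) r0 addr0.
have := m_min `|(x %% m)%Z|%N; rewrite -r_abs in Sr.
by rewrite absz_gt0 r_neq0 => /(_ (asboolT Sr)); lia.
Qed.

Section Hermite.
Variable H : int -> int -> Prop.
Hypothesis H0 : H 0 0.
Hypothesis HD : forall a b c d, H a b -> H c d -> H (a + c) (b + d).
Hypothesis HN : forall a b, H a b -> H (- a) (- b).

Lemma intgroup2Z k a b : H a b -> H (k * a) (k * b).
Proof.
move=> Hab; have Hn (n : nat) : H (n%:Z * a) (n%:Z * b).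
  by elim: n => [|n IH]; rewrite ?mul0r // -addn1 PoszD !mulrDl !mul1r; apply: HD.
by case: k => n; [|rewrite NegzE !mulNr; apply: HN].
Qed.

Lemma intgroup2B a b c d : H a b -> H c d -> H (a - c) (b - d).
Proof. by move=> h1 h2; apply: HD => //; apply: HN. Qed.

(* Hermite normal form of a full-rank subgroup of [Z^2]. *)
Lemma intgroup2_hermite n : n != 0 -> H n 0 -> H 0 n ->
  exists a1 b1 b2, [/\ a1 != 0, b2 != 0, H a1 b1, H 0 b2 &
    forall a b, H a b -> exists k l, a = k * a1 /\ b = k * b1 + l * b2].
Proof.
move=> n0 Hn1 Hn2.
have [a1 [a1_gt0 [b1 Hab1] a1_gen]] := @intgroup_cyclic (fun a => exists b, H a b)
  (fun x y '(ex_intro bx hx) '(ex_intro by' hy) => ex_intro _ (bx - by') (intgroup2B hx hy))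
  (fun k x '(ex_intro bx hx) => ex_intro _ (k * bx) (intgroup2Z k hx)) n n0 (ex_intro _ 0 Hn1).
have [b2 [b2_gt0 Hb2 b2_gen]] := @intgroup_cyclic (H 0)
  (fun x y hx hy => eq_ind _ (H^~ (x - y)) (intgroup2B hx hy) _ (subrr 0))
  (fun k x hx => eq_ind _ (H^~ (k * x)) (intgroup2Z k hx) _ (mulr0 k)) n n0 Hn2.
exists a1, b1, b2; split; rewrite ?gt_eqF // => a b Hab.
have [k ek] := a1_gen a (ex_intro _ b Hab).
have /b2_gen[l el] : H 0 (b - k * b1).
  by have := intgroup2B Hab (intgroup2Z k Hab1); rewrite ek subrr.
by exists k, l; split => //; rewrite -el addrC subrK.
Qed.

End Hermite.

Lemma pcross_cramer (R : realType) (g g1 g2 : 'M[R]_3) :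
  pcross g1 g2 *: pH g = pcross g g2 *: pH g1 + pcross g1 g *: pH g2.
Proof. by apply/matrixP => i j; rewrite !mxE /pcross; case: ifP => _; ring. Qed.

Lemma det_col2mx_pH (R : realType) (g h : 'M[R]_3) : \det (col2mx (pH g) (pH h)) = pcross g h.
Proof. by rewrite det_col2mx !mxE. Qed.

Section PBasis.
Variable R : realType.
Implicit Types g h : 'M[R]_3.
Variable L : set 'M[R]_3.
Hypothesis Llat : is_lattice L.
Variable xi : R.
Hypothesis Lxi : is_xi L xi.
Variables (g1 g2 : 'M[R]_3) (n : int).
Hypotheses (Lg1 : L g1) (Lg2 : L g2) (n_neq0 : n != 0).
Hypothesis pcross12 : pcross g1 g2 = n%:~R * xi.

Let LH : L `<=` @H3 R.
Proof. by case: Llat => -[]. Qed.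

(* Integer coordinates of [p g] in the basis [p g1 / n, p g2 / n]. *)
Let coords a b := exists g, [/\ L g, pcross g g2 = a%:~R * xi & pcross g1 g = b%:~R * xi].

Let coords0 : coords 0 0.
Proof.
case: Llat => -[_ L1 _ _] _ _.
by exists 1%:M; split; rewrite // /pcross !mxE /= !mul0r ?mulr0 subrr.
Qed.

Let coordsD a b c d : coords a b -> coords c d -> coords (a + c) (b + d).
Proof.
move=> [g [Lg ea eb]] [h [Lh ec ed]].
have [_ e1 e2 _] := H3_mulmx (LH Lg) (LH Lh).
case: Llat => -[_ _ LM _] _ _; exists (g *m h); split; first exact: LM.
- by rewrite intrD mulrDl -ea -ec /pcross e1 e2; ring.
- by rewrite intrD mulrDl -eb -ed /pcross e1 e2; ring.
Qed.

Let coordsN a b : coords a b -> coords (- a) (- b).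
Proof.
move=> [g [Lg ea eb]]; have [_ e1 e2 _] := H3_invmx (LH Lg).
case: Llat => -[_ _ _ LV] _ _; exists (invmx g); split; first exact: LV.
- by rewrite intrN mulNr -ea /pcross e1 e2; ring.
- by rewrite intrN mulNr -eb /pcross e1 e2; ring.
Qed.

Let coordsZ := intgroup2Z coords0 coordsD coordsN.

Let xi_neq0 : xi != 0.
Proof. by case: Lxi => /gt_eqF ->. Qed.

Let pH_coords g a b : pcross g g2 = a%:~R * xi -> pcross g1 g = b%:~R * xi ->
  pH g = n%:~R^-1 *: (a%:~R *: pH g1 + b%:~R *: pH g2).
Proof.
move=> ea eb; have := pcross_cramer g g1 g2; rewrite pcross12 ea eb.
move=> /(congr1 (fun v => (n%:~R * xi)^-1 *: v)).
rewrite scalerA mulVf ?mulf_neq0 ?intr_eq0 // scale1r => ->.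
by apply/matrixP => i j; rewrite !mxE; field; rewrite xi_neq0 intr_eq0 n_neq0.
Qed.

Lemma pbasis_of_pcross : exists B, is_pbasis L B.
Proof.
have coords_n0 : coords n 0 by exists g1; split; rewrite // /pcross mul0r; ring.
have coords_0n : coords 0 n by exists g2; split; rewrite // /pcross mul0r; ring.
have [a1 [b1 [b2 [a1_neq0 b2_neq0 Hab1 Hb2 Hgen]]]] :=
  intgroup2_hermite coords0 coordsD coordsN n_neq0 coords_n0 coords_0n.
pose u := n%:~R^-1 *: (a1%:~R *: pH g1 + b1%:~R *: pH g2).
pose v := n%:~R^-1 *: (b2%:~R *: pH g2).
have B_mul (z : 'cV[int]_2) : col2mx u v *m map_mx intr z =
    n%:~R^-1 *: ((z 0 0 * a1)%:~R *: pH g1 + (z 0 0 * b1 + z 1 0 * b2)%:~R *: pH g2).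
  by rewrite col2mx_mul; apply/matrixP => i j; rewrite !mxE !(intrD, intrM); ring.
have detB : \det (col2mx u v) = (a1 * b2)%:~R / n%:~R ^+ 2 * pcross g1 g2.
  by rewrite det_col2mx !mxE /= intrM /pcross; field; rewrite intr_eq0.
exists (col2mx u v); split.
  rewrite unitmxE unitfE detB pcross12.
  by rewrite !mulf_neq0 ?invr_neq0 ?expf_neq0 ?intr_eq0 ?mulf_neq0.
apply/seteqP; split => [_ [g Lg <-]|_ [_ [z _ <-] <-]].
  have [a ea] := lattice_pcross_xiZ Llat Lxi Lg Lg2.
  have [b eb] := lattice_pcross_xiZ Llat Lxi Lg1 Lg.
  have [k [l [ek el]]] := Hgen a b (ex_intro _ g (And3 Lg ea eb)).
  exists (map_mx intr (\col_i (if i == 0 then k else l))); first by eexists.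
  by rewrite B_mul (pH_coords ea eb) ek el !mxE.
have [g [Lg ea eb]] : coords (z 0 0 * a1) (z 0 0 * b1 + z 1 0 * b2).
  by have := coordsD (coordsZ (z 0 0) Hab1) (coordsZ (z 1 0) Hb2); rewrite mulr0 addr0.
by exists g => //; rewrite B_mul (pH_coords ea eb).
Qed.

End PBasis.

Section Dual.
Variable R : realType.

Lemma Zvec_delta (c : 'I_2) : Zvec (delta_mx c 0 : 'cV[R]_2).
Proof. by exists (delta_mx c 0) => //; rewrite map_delta_mx. Qed.

Lemma lattice_pbasis (L : set 'M[R]_3) xi :
  is_lattice L -> is_xi L xi -> exists B, is_pbasis L B.
Proof.
move=> Llat Lxi; have [g1 [g2 [Lg1 Lg2 D_neq0]]] := lattice_pcross_neq0 Llat.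
have [n Dn] := lattice_pcross_xiZ Llat Lxi Lg1 Lg2.
apply: (pbasis_of_pcross Llat Lxi Lg1 Lg2 _ Dn).
by apply: contraNneq D_neq0 => n0; rewrite Dn n0 mul0r.
Qed.

(* The two columns of [B] lift to [L], and their commutator is central. *)
Lemma pbasis_det_xiZ (L : set 'M[R]_3) xi B :
  is_lattice L -> is_xi L xi -> is_pbasis L B -> exists k : int, \det B = k%:~R * xi.
Proof.
move=> Llat Lxi [_ pL].
have col_pH c : exists2 g, L g & pH g = col c B.
  have [g Lg eg] : (@pH R @` L) (col c B).
    by rewrite pL colE; exists (delta_mx c 0) => //; exact: Zvec_delta.
  by exists g.
have [g0 Lg0 eg0] := col_pH 0; have [g1 Lg1 eg1] := col_pH 1.
have [k ek] := lattice_pcross_xiZ Llat Lxi Lg0 Lg1.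
by exists k; rewrite (col2mx_col B) -eg0 -eg1 det_col2mx_pH.
Qed.

Lemma pdual_col (L : set 'M[R]_3) B c : is_pbasis L B -> pdual L (col c (invmx B^T)).
Proof.
by move=> LB; exists B; split => //; rewrite colE; exists (delta_mx c 0) => //; exact: Zvec_delta.
Qed.

Lemma off_rational_rep_level S A As (K : 'M[R]_2) : off_rational_rep S A As ->
  (forall c, S (col c K)) ->
  exists J (Z : 'M[int]_2), K = A *m invmx (map_mx intr (As J)) *m map_mx intr Z.
Proof.
move=> [_ _ nest ->] SK.
pose img j := (fun v => invmx (map_mx intr (As j)) *m v) @` (@Zvec R).
have img_mono i J : (i <= J)%N -> img i `<=` img J.
  by move/subnK <-; elim: (J - i)%N => // d IH v /IH; rewrite addSn; exact: nest.
have /choice[i iP] c : exists i, exists z : 'cV[int]_2,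
    col c K = A *m (invmx (map_mx intr (As i)) *m map_mx intr z).
  by have [_ [i _ [_ [z _ <-] <-]] <-] := SK c; exists i, z.
pose J := maxn (i 0) (i 1).
have /choice[z zP] c : exists z : 'cV[int]_2,
    col c K = A *m invmx (map_mx intr (As J)) *m map_mx intr z.
  have [z0 ->] := iP c.
  have iJ : (i c <= J)%N by case: (ord2P c) => ->; rewrite ?leq_maxl ?leq_maxr.
  have [_ [z _ <-] ez] := img_mono _ _ iJ _ (ex_intro2 _ _ _ (ex_intro2 _ _ z0 I erefl) erefl).
  by exists z; rewrite -mulmxA ez.
exists J, (col2mx (z 0) (z 1)).
by rewrite map_col2mx mulmx_col2mx -!zP -col2mx_col.
Qed.

End Dual.

Theorem proposition5p4 (R : realType) (G : nat -> set 'M[R]_3)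
    (Glat : forall j, is_lattice (G j))
    (Gnest : forall j, G j.+1 `<=` G j)
    (A : 'M[R]_2) (As : nat -> 'M[int]_2)
    (Srep : off_rational_rep (S_Gamma G) A As) :
  xi_Gamma G `<=` tau A As.
Proof.
move=> _ [j [xi [Lxi [m ->]]]].
have [B LB] := lattice_pbasis (Glat j) Lxi.
have [k detB] := pbasis_det_xiZ (Glat j) Lxi LB.
have [J [Z eK]] := off_rational_rep_level Srep (fun c => ex_intro2 _ _ j I (pdual_col c LB)).
have := congr1 determinant eK; rewrite det_inv det_tr !det_mulmx det_inv !det_map_mx detB.
have [Bu _] := LB; have [_ /(_ J) AsU _ _] := Srep.
rewrite unitmxE unitfE det_map_mx in AsU.
have : k%:~R * xi != 0 by rewrite -detB -unitfE -unitmxE.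
rewrite mulf_eq0 negb_or => /andP[k_neq0 xi_neq0] detK.
exists J, (m * k * \det Z).
transitivity (m%:~R * k%:~R * (k%:~R * xi)^-1); first by field; rewrite k_neq0 xi_neq0.
by rewrite detK !intrM; field.
Qed.
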